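(* For every $\delta\in\mathbb R$, $$\lim_{T\to\infty,\,T\in2\mathbb N}(Q_T)^{-1}(e^{-\delta})=(Q_\infty)^{-1}(e^{-\delta}\wedge1).$$
   Context: $(S_n)$ is the simple symmetric random walk on $\mathbb Z$ started at $0$ with law $\mathbf P$. For $T\in2\mathbb N\cup\{\infty\}$, $\tau^T_1:=\inf\{n>0:S_n\in\{-T,0,T\}\}$ (for $T=\infty$ the first return time to $0$) and $Q_T(\lambda):=\mathbf E[e^{-\lambda\tau^T_1}]$. For $T<\infty$, $Q_T$ is finite, analytic, strictly decreasing on $(\lambda_0^T,\infty)$, $\lambda_0^T:=-\frac12\log(1+\tan^2(\pi/T))<0$, with $Q_T(\lambda)\to\infty$ as $\lambda\downarrow\lambda_0^T$ and $\to0$ as $\lambda\to\infty$; $(Q_T)^{-1}:(0,\infty)\to(\lambda^T_0,\infty)$ is its inverse. $Q_\infty(\lambda)=1-\sqrt{1-e^{-2\lambda}}$ for $\lambda\ge0$ (and $+\infty$ for $\lambda<0$), with inverse $(Q_\infty)^{-1}:(0,1]\to[0,\infty)$. *)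

From Stdlib Require Import Reals Lra ZArith List ClassicalEpsilon.
Import ListNotations.
Open Scope R_scope.

Definition step (b : bool) : Z := if b then 1%Z else (-1)%Z.

Fixpoint all_paths (n : nat) : list (list bool) :=
  match n with
  | O => [nil]
  | S m => map (cons true) (all_paths m) ++ map (cons false) (all_paths m)
  end.

Definition pos (p : list bool) (j : nat) : Z :=
  fold_right Z.add 0%Z (map step (firstn j p)).

(* Target set: {-T,0,T} for T = Some T, {0} for T = None (T = infinity). *)
Definition hitb (T : option nat) (x : Z) : bool :=
  match T with
  | None => Z.eqb x 0
  | Some t => Z.eqb x 0 || Z.eqb x (Z.of_nat t) || Z.eqb x (- Z.of_nat t)
  end.

(* tau^T_1 = length p on the path p (first n > 0 with S_n in the target set). *)
Definition first_hit (T : option nat) (p : list bool) : bool :=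
  Nat.ltb 0 (length p) && hitb T (pos p (length p))
  && forallb (fun j => negb (hitb T (pos p j))) (seq 1 (length p - 1)).

Definition tau_prob (T : option nat) (n : nat) : R :=
  INR (length (filter (first_hit T) (all_paths n))) / 2 ^ n.

(* n-th term of E[exp(-lambda tau^T_1)] = sum_n P(tau = n) e^{-lambda n}. *)
Definition Q_term (T : option nat) (lam : R) (n : nat) : R :=
  tau_prob T n * exp (- lam * INR n).

Definition Q_eq (T : option nat) (lam y : R) : Prop :=
  infinite_sum (Q_term T lam) y.

(* (Q_T)^{-1}(y): the (unique, by strict monotonicity) lambda with Q_T(lambda) = y. *)
Definition Qinv (T : option nat) (y : R) : R :=
  epsilon (inhabits 0) (fun lam => Q_eq T lam y).

(* Write a_h(n) = P(tau = n), q_h(n) = P(tau > n) for the first time tau > 0 at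
   which the walk is in the target h, and G_h(s) = sum_n a_h(n) s^n, so that
   Q_T(lam) = G_T(exp (-lam)).  The development has four layers.
   1. Counting paths by their first step: a_h(n+1) = q_h(n) - q_h(n+1),
      a_h(2) >= 1/2, and q_h decreases when the target grows.
   2. The strip: the eigenfunction sin(PI x/T) of the killed walk gives
      sin(PI/T) cos(PI/T)^n <= q_T(n+1) <= cos(PI/T)^n, and a gambler's-ruin
      bound gives q_T <= q_oo <= q_T + 1/T.
   3. Power series with nonnegative coefficients: Abel summation, the gap
      G(t) - G(s) >= a(2) (t^2 - s^2), the comparison |G_T - G_oo| <= 2/T on
      [0,1], and an intermediate value theorem.  They show that Qinv returns a
      genuine root, for y > 1 by letting s approach the radius 1/cos(PI/T).
   4. With s_oo = exp (-Qinv_oo (min y 1)) <= 1 and s_T = exp (-Qinv_T y):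
      s_oo e^-eps < s_T by comparison, and s_T < s_oo e^eps, by comparison if
      y <= 1, and if y > 1 (then s_oo = 1) because G_T diverges beyond
      1/cos(PI/T), which tends to 1.  Taking logarithms gives the theorem. *)

From Pilot Require Import Defs.
From Stdlib Require Import Reals Lra Lia List ZArith ClassicalEpsilon.
Import ListNotations.
Open Scope R_scope.

(** First-step decomposition of the walk. *)

Definition first_hit_from (h : Z -> bool) (x : Z) (p : list bool) : bool :=
  Nat.ltb 0 (length p) && h (x + Defs.pos p (length p))%Z
  && forallb (fun j => negb (h (x + Defs.pos p j)%Z)) (seq 1 (length p - 1)).

Lemma first_hit_from_0 T p : first_hit T p = first_hit_from (hitb T) 0 p.
Proof. reflexivity. Qed.

Lemma pos_cons b p j : Defs.pos (b :: p) (S j) = (step b + Defs.pos p j)%Z.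
Proof. reflexivity. Qed.

Lemma forallb_map_ext {A B} (f : B -> bool) (g : A -> B) (k : A -> bool) l :
  (forall x, f (g x) = k x) -> forallb f (map g l) = forallb k l.
Proof. intros E; induction l as [|x l IH]; simpl; [easy|]. now rewrite E, IH. Qed.

Lemma first_hit_from_cons h x b p :
  first_hit_from h x (b :: p) =
  if h (x + step b)%Z then match p with [] => true | _ => false end
  else first_hit_from h (x + step b)%Z p.
Proof.
  unfold first_hit_from; simpl length.
  replace (S (length p) - 1)%nat with (length p) by lia.
  rewrite pos_cons, Z.add_assoc.
  destruct p as [|c p'].
  - simpl. rewrite Z.add_0_r. now destruct (h (x + step b)%Z).
  - set (p := c :: p').
    assert (Hl : length p = S (length p')) by reflexivity.
    rewrite Hl; simpl seq; simpl forallb.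
    change (Defs.pos (b :: p) 1) with (step b + 0)%Z. rewrite Z.add_0_r.
    rewrite <- seq_shift.
    rewrite (forallb_map_ext _ S (fun j => negb (h (x + step b + Defs.pos p j)%Z)))
      by (intros j; now rewrite pos_cons, Z.add_assoc).
    replace (S (length p') - 1)%nat with (length p') by lia.
    destruct (h (x + step b)%Z); simpl; [now destruct (h _)|].
    now rewrite Nat.sub_0_r.
Qed.

(* Number of paths of length [n] from [x] that first hit [h] at time [n]. *)
Fixpoint hits (h : Z -> bool) (n : nat) (x : Z) : nat :=
  match n with
  | O => O
  | S m =>
      ((if h (x + 1)%Z then match m with O => 1 | _ => 0 end
        else hits h m (x + 1)%Z)
     + (if h (x - 1)%Z then match m with O => 1 | _ => 0 end
        else hits h m (x - 1)%Z))%nat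
  end.

(* Number of paths of length [n] from [x] that avoid [h] at times [1..n]. *)
Fixpoint survivors (h : Z -> bool) (n : nat) (x : Z) : nat :=
  match n with
  | O => 1%nat
  | S m =>
      ((if h (x + 1)%Z then O else survivors h m (x + 1)%Z)
     + (if h (x - 1)%Z then O else survivors h m (x - 1)%Z))%nat
  end.

Lemma survivors_S h n x : survivors h (S n) x =
  ((if h (x + 1)%Z then O else survivors h n (x + 1)%Z)
 + (if h (x - 1)%Z then O else survivors h n (x - 1)%Z))%nat.
Proof. reflexivity. Qed.

Lemma count_split (f : list bool -> bool) n :
  length (filter f (all_paths (S n))) =
  (length (filter (fun p => f (true :: p)) (all_paths n))
   + length (filter (fun p => f (false :: p)) (all_paths n)))%nat.
Proof. simpl. now rewrite filter_app, length_app, !filter_map_swap, !length_map. Qed.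

Lemma count_first_hit h n x :
  length (filter (first_hit_from h x) (all_paths n)) = hits h n x.
Proof.
  revert x; induction n as [|n IH]; intros x; [reflexivity|].
  rewrite count_split; simpl hits.
  assert (Hb : forall b,
    length (filter (fun p => first_hit_from h x (b :: p)) (all_paths n)) =
    if h (x + step b)%Z then match n with O => 1%nat | _ => O end
    else hits h n (x + step b)%Z).
  { intros b. rewrite (filter_ext _ _ (first_hit_from_cons h x b)).
    destruct (h (x + step b)%Z); [|apply IH].
    destruct n as [|n]; [reflexivity|].
    rewrite count_split. simpl. now rewrite !filter_false. }
  rewrite !Hb. reflexivity.
Qed.

(* Every surviving path of length [n] either hits at time [n+1] or survives. *)
Lemma hits_survivors h n x :
  (hits h (S n) x + survivors h (S n) x = 2 * survivors h n x)%nat.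
Proof.
  revert x; induction n as [|n IH]; intros x.
  - simpl. destruct (h (x + 1)%Z), (h (x - 1)%Z); simpl; lia.
  - change (hits h (S (S n)) x) with
      ((if h (x + 1)%Z then O else hits h (S n) (x + 1)%Z)
     + (if h (x - 1)%Z then O else hits h (S n) (x - 1)%Z))%nat.
    rewrite !survivors_S.
    pose proof (IH (x + 1)%Z); pose proof (IH (x - 1)%Z).
    destruct (h (x + 1)%Z), (h (x - 1)%Z); simpl in *; lia.
Qed.

Definition survival (h : Z -> bool) (n : nat) : R := INR (survivors h n 0) / 2 ^ n.
Definition hitting (h : Z -> bool) (n : nat) : R := INR (hits h n 0) / 2 ^ n.

Lemma tau_prob_hitting T n : tau_prob T n = hitting (hitb T) n.
Proof.
  unfold tau_prob, hitting.
  now rewrite (filter_ext _ _ (first_hit_from_0 T)), count_first_hit.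
Qed.

Lemma hitting_0 h : hitting h 0 = 0.
Proof. unfold hitting; simpl; lra. Qed.

Lemma survival_0 h : survival h 0 = 1.
Proof. unfold survival; simpl; lra. Qed.

Lemma hitting_S h n : hitting h (S n) = survival h n - survival h (S n).
Proof.
  unfold hitting, survival.
  pose proof (f_equal INR (hits_survivors h n 0)) as E.
  rewrite plus_INR, mult_INR in E; simpl (INR 2) in E.
  assert (0 < 2 ^ n) by (apply pow_lt; lra).
  simpl pow. apply Rmult_eq_reg_r with (2 * 2 ^ n); [|lra].
  field_simplify; lra.
Qed.

Lemma hitting_nonneg h n : 0 <= hitting h n.
Proof.
  unfold hitting, Rdiv. apply Rmult_le_pos; [apply pos_INR|].
  left; apply Rinv_0_lt_compat, pow_lt; lra.
Qed.

Lemma survivors_le h n x : (survivors h n x <= 2 ^ n)%nat.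
Proof.
  revert x; induction n as [|n IH]; intros x; simpl; [lia|].
  pose proof (IH (x + 1)%Z); pose proof (IH (x - 1)%Z).
  destruct (h (x + 1)%Z), (h (x - 1)%Z); lia.
Qed.

Lemma survivors_antitone (h1 h2 : Z -> bool)
    (H12 : forall z, h1 z = true -> h2 z = true) n x :
  (survivors h2 n x <= survivors h1 n x)%nat.
Proof.
  revert x; induction n as [|n IH]; intros x; simpl; [lia|].
  pose proof (IH (x + 1)%Z); pose proof (IH (x - 1)%Z).
  pose proof (H12 (x + 1)%Z); pose proof (H12 (x - 1)%Z).
  destruct (h1 (x + 1)%Z), (h1 (x - 1)%Z), (h2 (x + 1)%Z), (h2 (x - 1)%Z);
    try lia; exfalso; intuition congruence.
Qed.

Lemma survival_bounds h n : 0 <= survival h n <= 1.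
Proof.
  unfold survival. pose proof (le_INR _ _ (survivors_le h n 0)) as Hle.
  rewrite pow_INR in Hle; simpl (INR 2) in Hle.
  assert (0 < 2 ^ n) by (apply pow_lt; lra).
  split.
  - apply Rmult_le_pos; [apply pos_INR|]. left; apply Rinv_0_lt_compat; lra.
  - apply Rmult_le_reg_r with (2 ^ n); [lra|].
    unfold Rdiv; rewrite Rmult_assoc, Rinv_l; [|lra]. rewrite Rmult_1_r, Rmult_1_l. exact Hle.
Qed.

Lemma survival_antitone (h1 h2 : Z -> bool)
    (H12 : forall z, h1 z = true -> h2 z = true) n :
  survival h2 n <= survival h1 n.
Proof.
  unfold survival, Rdiv. apply Rmult_le_compat_r.
  - left; apply Rinv_0_lt_compat, pow_lt; lra.
  - apply le_INR, survivors_antitone, H12.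
Qed.

Definition admissible (h : Z -> bool) : Prop :=
  h 0%Z = true /\ h 1%Z = false /\ forall z, h (- z)%Z = h z.

Lemma hitb_sym T z : hitb T (- z)%Z = hitb T z.
Proof.
  destruct T as [t|]; simpl.
  - destruct (Z.eqb_spec (-z) 0), (Z.eqb_spec z 0),
      (Z.eqb_spec (-z) (Z.of_nat t)), (Z.eqb_spec z (Z.of_nat t)),
      (Z.eqb_spec (-z) (- Z.of_nat t)), (Z.eqb_spec z (- Z.of_nat t));
      simpl; auto; lia.
  - destruct (Z.eqb_spec (-z) 0), (Z.eqb_spec z 0); auto; lia.
Qed.

Lemma admissible_strip T : (2 <= T)%nat -> admissible (hitb (Some T)).
Proof.
  intros HT. split; [reflexivity|]. split; [|apply hitb_sym].
  unfold hitb.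
  rewrite (proj2 (Z.eqb_neq 1 (Z.of_nat T))) by lia.
  rewrite (proj2 (Z.eqb_neq 1 (- Z.of_nat T))) by lia. reflexivity.
Qed.

Lemma admissible_origin : admissible (hitb None).
Proof. split; [reflexivity|]. split; [reflexivity|apply hitb_sym]. Qed.

Section Admissible.
Variable h : Z -> bool.
Hypothesis Hh : admissible h.

Lemma survivors_sym n x : survivors h n (- x) = survivors h n x.
Proof.
  destruct Hh as (_ & _ & Hs).
  revert x; induction n as [|n IH]; intros x; [reflexivity|]. simpl.
  replace (- x + 1)%Z with (- (x - 1))%Z by lia.
  replace (- x - 1)%Z with (- (x + 1))%Z by lia.
  rewrite !Hs, !IH. lia.
Qed.

(* By symmetry, surviving n+1 steps means: first step to 1, then n steps. *)
Lemma survival_S n : survival h (S n) = INR (survivors h n 1) / 2 ^ n.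
Proof.
  destruct Hh as (_ & H1 & Hs).
  assert (Hm1 : h (-1)%Z = false) by exact (eq_trans (Hs 1%Z) H1).
  unfold survival; simpl survivors; simpl Z.add; simpl Z.sub.
  rewrite H1, Hm1.
  change (-1)%Z with (Z.opp 1). rewrite survivors_sym.
  replace (survivors h n 1 + survivors h n 1)%nat with (2 * survivors h n 1)%nat by lia.
  rewrite mult_INR; simpl pow; simpl (INR 2).
  field. apply pow_nonzero; lra.
Qed.

Lemma hitting_2 : 1 / 2 <= hitting h 2.
Proof.
  destruct Hh as (H0 & H1 & Hs).
  assert (Hm1 : h (-1)%Z = false) by exact (eq_trans (Hs 1%Z) H1).
  assert (Hcount : (2 <= hits h 2 0)%nat).
  { simpl. rewrite H1, Hm1. simpl. rewrite H0.
    destruct (h 2%Z), (h (-2)%Z); simpl; lia. }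
  unfold hitting. apply le_INR in Hcount. simpl in *. lra.
Qed.

End Admissible.

(** The walk in the strip: targets [{-T,0,T}]. *)

(* [cos (PI/T)] is the spectral radius of the walk killed at [0] and [T]. *)
Definition cT (T : nat) : R := cos (PI / INR T).
Definition sT (T : nat) : R := sin (PI / INR T).

Section Strip.
Variable T : nat.
Hypothesis HT : (2 <= T)%nat.

Local Notation hT := (hitb (Some T)).

(* The principal Dirichlet eigenfunction of the discrete Laplacian on [0,T]. *)
Definition profile (x : Z) : R := sin (PI * IZR x / INR T).

Lemma INR_T_pos : 0 < INR T.
Proof. apply lt_0_INR; lia. Qed.

Lemma profile_eigen x : profile (x + 1) + profile (x - 1) = 2 * cT T * profile x.
Proof.
  unfold profile, cT. pose proof INR_T_pos.
  rewrite plus_IZR, minus_IZR.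
  replace (PI * (IZR x + 1) / INR T) with (PI * IZR x / INR T + PI / INR T) by (field; lra).
  replace (PI * (IZR x - 1) / INR T) with (PI * IZR x / INR T - PI / INR T) by (field; lra).
  rewrite sin_plus, sin_minus. ring.
Qed.

Lemma profile_0 : profile 0 = 0.
Proof.
  unfold profile. replace (PI * IZR 0 / INR T) with 0 by (simpl; field; apply Rgt_not_eq, INR_T_pos).
  apply sin_0.
Qed.

Lemma profile_T : profile (Z.of_nat T) = 0.
Proof.
  unfold profile. rewrite <- INR_IZR_INZ. pose proof INR_T_pos.
  replace (PI * INR T / INR T) with PI by (field; lra). apply sin_PI.
Qed.

Lemma profile_1 : profile 1 = sT T.
Proof. unfold profile, sT. f_equal. simpl. field. apply Rgt_not_eq, INR_T_pos. Qed.

Lemma profile_interior x : (0 < x < Z.of_nat T)%Z -> sT T <= profile x <= 1.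
Proof.
  intros Hx. split; [|apply SIN_bound].
  unfold sT, profile. pose proof INR_T_pos. pose proof PI_RGT_0.
  assert (H1 : 1 <= IZR x) by (apply IZR_le; lia).
  assert (H2 : IZR x <= INR T - 1).
  { rewrite INR_IZR_INZ, <- minus_IZR. apply IZR_le; lia. }
  assert (Hhalf : forall X, 1 <= X -> X <= INR T / 2 ->
                  sin (PI / INR T) <= sin (PI * X / INR T)).
  { intros X HX1 HX2.
    assert (0 < PI / INR T) by (apply Rdiv_lt_0_compat; lra).
    assert (PI / INR T <= PI * X / INR T).
    { unfold Rdiv; apply Rmult_le_compat_r; [left; apply Rinv_0_lt_compat; lra|nra]. }
    assert (PI * X / INR T <= PI / 2).
    { apply Rmult_le_reg_r with (INR T); [lra|]. field_simplify; [|lra]. nra. }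
    apply sin_incr_1; lra. }
  destruct (Rle_dec (IZR x) (INR T / 2)).
  - apply Hhalf; lra.
  - rewrite <- (sin_PI_x (PI * IZR x / INR T)).
    replace (PI - PI * IZR x / INR T) with (PI * (INR T - IZR x) / INR T) by (field; lra).
    apply Hhalf; lra.
Qed.

Lemma strip_step_up x : (0 < x < Z.of_nat T)%Z -> hT (x + 1)%Z = Z.eqb (x + 1) (Z.of_nat T).
Proof.
  intros Hx. unfold hitb.
  rewrite (proj2 (Z.eqb_neq (x + 1) 0)), (proj2 (Z.eqb_neq (x + 1) (- Z.of_nat T))) by lia.
  now destruct (Z.eqb (x + 1) (Z.of_nat T)).
Qed.

Lemma strip_step_down x : (0 < x < Z.of_nat T)%Z -> hT (x - 1)%Z = Z.eqb (x - 1) 0.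
Proof.
  intros Hx. unfold hitb.
  rewrite (proj2 (Z.eqb_neq (x - 1) (Z.of_nat T))), (proj2 (Z.eqb_neq (x - 1) (- Z.of_nat T))) by lia.
  now destruct (Z.eqb (x - 1) 0).
Qed.

(* [(2 cT)^n profile] satisfies the same recursion as [survivors] in the
   interior and vanishes on the boundary; this sandwiches the survivor count. *)
Lemma survivors_strip n x : (0 < x < Z.of_nat T)%Z ->
  (2 * cT T) ^ n * profile x <= INR (survivors hT n x) /\
  sT T * INR (survivors hT n x) <= (2 * cT T) ^ n * profile x.
Proof.
  revert x; induction n as [|n IH]; intros x Hx.
  - pose proof (profile_interior x Hx). simpl. lra.
  - assert (Hbranch : forall z b, z = (x + 1)%Z /\ b = Z.eqb (x + 1) (Z.of_nat T)
                              \/ z = (x - 1)%Z /\ b = Z.eqb (x - 1) 0 ->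
      (2 * cT T) ^ n * profile z <= INR (if b then O else survivors hT n z) /\
      sT T * INR (if b then O else survivors hT n z) <= (2 * cT T) ^ n * profile z).
    { intros z b [[-> ->]|[-> ->]].
      - destruct (Z.eqb_spec (x + 1) (Z.of_nat T)) as [E|E];
          [rewrite E, profile_T; simpl; lra | apply IH; lia].
      - destruct (Z.eqb_spec (x - 1) 0) as [E|E];
          [rewrite E, profile_0; simpl; lra | apply IH; lia]. }
    rewrite survivors_S, plus_INR, strip_step_up, strip_step_down by exact Hx.
    replace ((2 * cT T) ^ S n * profile x)
      with ((2 * cT T) ^ n * profile (x + 1) + (2 * cT T) ^ n * profile (x - 1))
      by (rewrite <- Rmult_plus_distr_l, profile_eigen; simpl; ring).
    pose proof (Hbranch (x + 1)%Z _ (or_introl (conj eq_refl eq_refl))).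
    pose proof (Hbranch (x - 1)%Z _ (or_intror (conj eq_refl eq_refl))).
    lra.
Qed.

Lemma sT_pos : 0 < sT T.
Proof.
  unfold sT. pose proof INR_T_pos. pose proof PI_RGT_0.
  assert (1 < INR T) by (apply lt_1_INR; lia).
  apply sin_gt_0; [apply Rdiv_lt_0_compat; lra|].
  apply Rmult_lt_reg_r with (INR T); [lra|]. field_simplify; [|lra]. nra.
Qed.

Lemma cT_range : 0 <= cT T < 1.
Proof.
  unfold cT. pose proof INR_T_pos. pose proof PI_RGT_0.
  assert (2 <= INR T) by (apply (le_INR 2); lia).
  assert (0 < PI / INR T) by (apply Rdiv_lt_0_compat; lra).
  assert (PI / INR T <= PI / 2).
  { apply Rmult_le_reg_r with (INR T); [lra|]. field_simplify; [|lra]. nra. }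
  split; [apply cos_ge_0; lra|].
  rewrite <- cos_0. apply cos_decreasing_1; lra.
Qed.

Lemma survival_strip n : sT T * cT T ^ n <= survival hT (S n) <= cT T ^ n.
Proof.
  rewrite (survival_S _ (admissible_strip T HT)).
  destruct (survivors_strip n 1 ltac:(lia)) as [Hlo Hup].
  rewrite profile_1, Rpow_mult_distr in Hlo, Hup.
  pose proof sT_pos. pose proof cT_range.
  assert (0 < 2 ^ n) by (apply pow_lt; lra).
  assert (0 <= cT T ^ n) by (apply pow_le; lra).
  set (D := INR (survivors hT n 1)) in *.
  assert (HD : D / 2 ^ n * 2 ^ n = D) by (field; lra).
  split; apply Rmult_le_reg_r with (2 ^ n); auto; rewrite HD.
  - nra.
  - apply Rmult_le_reg_l with (sT T); nra.
Qed.

(* A walk killed only at 0 survives longer, but reaching [T] before [n] from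
   [x] has probability at most [x / T]; this bounds the discrepancy. *)
Lemma survivors_origin_vs_strip n x : (0 < x < Z.of_nat T)%Z ->
  INR (survivors (hitb None) n x) <= INR (survivors hT n x) + 2 ^ n * IZR x / INR T.
Proof.
  pose proof INR_T_pos.
  revert x; induction n as [|n IH]; intros x Hx.
  - simpl. assert (0 < IZR x) by (apply IZR_lt; lia).
    assert (0 < 1 * IZR x / INR T) by (apply Rdiv_lt_0_compat; lra). lra.
  - rewrite !survivors_S, !plus_INR, strip_step_up, strip_step_down by exact Hx.
    assert (Hnone : hitb None (x + 1)%Z = false) by (apply Z.eqb_neq; lia).
    change (hitb None (x - 1)%Z) with (Z.eqb (x - 1) 0). rewrite Hnone.
    assert (Hup : INR (survivors (hitb None) n (x + 1)) <=
        INR (if (x + 1 =? Z.of_nat T)%Z then O else survivors hT n (x + 1))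
        + 2 ^ n * IZR (x + 1) / INR T).
    { destruct (Z.eqb_spec (x + 1) (Z.of_nat T)) as [E|E]; [|apply IH; lia].
      rewrite E, <- INR_IZR_INZ.
      pose proof (le_INR _ _ (survivors_le (hitb None) n (Z.of_nat T))) as Hle.
      rewrite pow_INR in Hle. replace (INR 2) with 2 in Hle by (simpl; lra).
      replace (2 ^ n * INR T / INR T) with (2 ^ n) by (field; lra). simpl. lra. }
    assert (Hdown : INR (if (x - 1 =? 0)%Z then O else survivors (hitb None) n (x - 1)) <=
        INR (if (x - 1 =? 0)%Z then O else survivors hT n (x - 1))
        + 2 ^ n * IZR (x - 1) / INR T).
    { destruct (Z.eqb_spec (x - 1) 0) as [E|E]; [rewrite E; simpl; lra|apply IH; lia]. }
    rewrite plus_IZR in Hup. rewrite minus_IZR in Hdown. simpl pow.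
    replace (2 * 2 ^ n * IZR x / INR T)
      with (2 ^ n * (IZR x + 1) / INR T + 2 ^ n * (IZR x - 1) / INR T) by (field; lra).
    lra.
Qed.

Lemma survival_origin_vs_strip n :
  survival hT n <= survival (hitb None) n <= survival hT n + 1 / INR T.
Proof.
  split.
  { apply survival_antitone. intros z Hz. simpl in *. now rewrite Hz. }
  pose proof INR_T_pos. destruct n as [|n].
  - rewrite !survival_0. assert (0 < 1 / INR T) by (apply Rdiv_lt_0_compat; lra). lra.
  - rewrite (survival_S _ admissible_origin), (survival_S _ (admissible_strip T HT)).
    pose proof (survivors_origin_vs_strip n 1 ltac:(lia)) as Hcmp.
    assert (0 < 2 ^ n) by (apply pow_lt; lra).
    apply Rmult_le_reg_r with (2 ^ n); [lra|].
    replace ((INR (survivors hT n 1) / 2 ^ n + 1 / INR T) * 2 ^ n)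
      with (INR (survivors hT n 1) + 2 ^ n * IZR 1 / INR T) by (simpl; field; lra).
    replace (INR (survivors (hitb None) n 1) / 2 ^ n * 2 ^ n)
      with (INR (survivors (hitb None) n 1)) by (field; lra).
    exact Hcmp.
Qed.

End Strip.

Lemma Un_cv_const (c : R) : Un_cv (fun _ => c) c.
Proof. intros e He. exists O. intros. unfold Rdist. rewrite Rminus_diag, Rabs_R0. lra. Qed.

Lemma Un_cv_le_eventually (u v : nat -> R) l1 l2 N0 :
  Un_cv u l1 -> Un_cv v l2 -> (forall n, (N0 <= n)%nat -> u n <= v n) -> l1 <= l2.
Proof.
  intros Hu Hv Huv. destruct (Rle_dec l1 l2) as [|Hgt]; [easy|exfalso].
  destruct (Hu ((l1 - l2) / 2) ltac:(lra)) as [N1 H1].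
  destruct (Hv ((l1 - l2) / 2) ltac:(lra)) as [N2 H2].
  set (n := Nat.max N0 (Nat.max N1 N2)).
  specialize (H1 n ltac:(lia)); specialize (H2 n ltac:(lia)); specialize (Huv n ltac:(lia)).
  unfold Rdist in *. apply Rabs_def2 in H1. apply Rabs_def2 in H2. lra.
Qed.

Lemma Un_cv_le_bound (u : nat -> R) l B N0 :
  Un_cv u l -> (forall n, (N0 <= n)%nat -> u n <= B) -> l <= B.
Proof. intros Hu Hb. exact (Un_cv_le_eventually u _ l B N0 Hu (Un_cv_const B) Hb). Qed.

Lemma pow_cv_0 r : 0 <= r < 1 -> Un_cv (fun n => r ^ n) 0.
Proof.
  intros Hr e He. destruct (pow_lt_1_zero r ltac:(rewrite Rabs_pos_eq; lra) e He) as [N HN].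
  exists N. intros n Hn. unfold Rdist. rewrite Rminus_0_r. auto.
Qed.

(** Power series with nonnegative coefficients. *)

Definition psum (a : nat -> R) (s : R) (M : nat) : R := sum_f_R0 (fun n => a n * s ^ n) M.

Lemma psum_S a s M : psum a s (S M) = psum a s M + a (S M) * s ^ S M.
Proof. apply tech5. Qed.

Lemma psum_continuous a M x : continuity_pt (fun s => psum a s M) x.
Proof.
  induction M as [|M IH]; unfold psum in *; simpl.
  - apply (continuity_pt_const (fun s => a 0%nat * 1)). intros u v; reflexivity.
  - apply (continuity_pt_plus (fun s => sum_f_R0 (fun n => a n * s ^ n) M)
                              (fun s => a (S M) * (s * s ^ M))); [exact IH|].
    apply (continuity_pt_scal (fun s => s * s ^ M)).
    apply derivable_continuous_pt, (derivable_pt_pow (S M)).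
Qed.

Section Nonneg.
Variable a : nat -> R.
Hypothesis a_nonneg : forall n, 0 <= a n.

Lemma psum_growing s : 0 <= s -> Un_growing (psum a s).
Proof.
  intros Hs M. rewrite psum_S.
  assert (0 <= a (S M) * s ^ S M) by (apply Rmult_le_pos; [|apply pow_le]; auto). lra.
Qed.

Lemma psum_le_limit s L M : 0 <= s -> Un_cv (psum a s) L -> psum a s M <= L.
Proof. intros Hs HL. exact (growing_ineq _ L (psum_growing s Hs) HL M). Qed.

Lemma psum_increment_mono s t M N : 0 <= s <= t -> (M <= N)%nat ->
  psum a s N - psum a s M <= psum a t N - psum a t M.
Proof.
  intros Hst HMN. induction HMN as [|N HMN IH]; [lra|]. rewrite !psum_S.
  assert (a (S N) * s ^ S N <= a (S N) * t ^ S N)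
    by (apply Rmult_le_compat_l; [|apply pow_incr]; auto). lra.
Qed.

Lemma psum_mono s t M : 0 <= s <= t -> psum a s M <= psum a t M.
Proof.
  intros Hst. pose proof (psum_increment_mono s t O M Hst ltac:(lia)).
  assert (E : forall r, psum a r 0 = a 0%nat) by (intros r; unfold psum; simpl; ring).
  rewrite !E in H. lra.
Qed.

Lemma psum_gap s t M : 0 <= s <= t -> (2 <= M)%nat ->
  a 2%nat * (t ^ 2 - s ^ 2) <= psum a t M - psum a s M.
Proof.
  intros Hst HM. pose proof (psum_increment_mono s t 2 M Hst HM).
  assert (E : forall r, psum a r 2 = a 0%nat + a 1%nat * r + a 2%nat * r ^ 2)
    by (intros r; unfold psum; simpl; ring).
  rewrite !E in H.
  assert (a 1%nat * s <= a 1%nat * t) by (apply Rmult_le_compat_l; [apply a_nonneg|lra]).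
  lra.
Qed.

Lemma limit_gap s t Ls Lt : 0 <= s <= t ->
  Un_cv (psum a s) Ls -> Un_cv (psum a t) Lt -> Ls + a 2%nat * (t ^ 2 - s ^ 2) <= Lt.
Proof.
  intros Hst Hs Ht.
  apply (Un_cv_le_eventually (fun M => psum a s M + a 2%nat * (t ^ 2 - s ^ 2)) (psum a t) _ _ 2).
  - apply CV_plus; [exact Hs|apply Un_cv_const].
  - exact Ht.
  - intros M HM. pose proof (psum_gap s t M Hst HM). lra.
Qed.

Lemma psum_converges_below v Lv s : 0 <= s <= v -> Un_cv (psum a v) Lv ->
  exists L, Un_cv (psum a s) L /\ forall M, 0 <= L - psum a s M <= Lv - psum a v M.
Proof.
  intros Hs Hv.
  destruct (growing_cv (psum a s) (psum_growing s ltac:(lra))) as [L HL].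
  { exists Lv. intros x [M ->]. eapply Rle_trans; [apply (psum_mono s v M Hs)|].
    apply psum_le_limit; [lra|exact Hv]. }
  exists L. split; [exact HL|]. intros M. split.
  - pose proof (psum_le_limit s L M ltac:(lra) HL). lra.
  - apply (Un_cv_le_bound (fun N => psum a s N - psum a s M) _ _ M).
    + apply CV_minus; [exact HL|apply Un_cv_const].
    + intros N HN. pose proof (psum_increment_mono s v M N Hs HN).
      pose proof (psum_le_limit v Lv N ltac:(lra) Hv). lra.
Qed.

End Nonneg.

Lemma geometric_psum x : 0 <= x < 1 -> Un_cv (psum (fun _ => 1) x) (/ (1 - x)).
Proof. intros Hx. apply GP_infinite. rewrite Rabs_pos_eq; lra. Qed.

Lemma uniform_limit_continuous (fn : nat -> R -> R) (f : R -> R) x :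
  (forall n, continuity_pt (fn n) x) ->
  (forall eps, 0 < eps -> exists N, forall s, Rabs (f s - fn N s) < eps) ->
  continuity_pt f x.
Proof.
  intros Hc Hu eps He. destruct (Hu (eps / 3) ltac:(lra)) as [N HN].
  destruct (Hc N (eps / 3) ltac:(lra)) as [del [Hd Hdel]].
  exists del. split; [exact Hd|]. intros y Hy. specialize (Hdel y Hy). simpl in *.
  unfold R_dist in *. pose proof (HN y) as Hy'. pose proof (HN x) as Hx'.
  apply Rabs_def2 in Hy'. apply Rabs_def2 in Hx'. apply Rabs_def2 in Hdel. apply Rabs_def1; lra.
Qed.

Definition clamp (u v s : R) : R := Rmax u (Rmin v s).

Lemma clamp_range u v s : u <= v -> u <= clamp u v s <= v.
Proof. intros Huv. unfold clamp, Rmax, Rmin. destruct (Rle_dec v s); destruct (Rle_dec u _); lra. Qed.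

Lemma clamp_id u v s : u <= s <= v -> clamp u v s = s.
Proof. intros Hs. unfold clamp, Rmax, Rmin. destruct (Rle_dec v s); destruct (Rle_dec u _); lra. Qed.

Lemma clamp_continuous u v x : u <= v -> continuity_pt (clamp u v) x.
Proof.
  intros Huv eps He. exists eps. split; [exact He|]. intros y [_ Hy]. simpl in *.
  unfold R_dist in *. eapply Rle_lt_trans; [|exact Hy].
  unfold clamp, Rmax, Rmin.
  destruct (Rle_dec v y), (Rle_dec v x); repeat destruct (Rle_dec u _);
    unfold Rabs; repeat destruct Rcase_abs; lra.
Qed.

Lemma psum_intermediate_value a (a_nonneg : forall n, 0 <= a n) u v Lu Lv y :
  0 <= u < v -> Un_cv (psum a u) Lu -> Un_cv (psum a v) Lv -> Lu < y < Lv ->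
  exists s, u <= s <= v /\ Un_cv (psum a s) y.
Proof.
  intros Huv Hu Hv Hy.
  set (F := fun s => epsilon (inhabits 0) (fun L => Un_cv (psum a s) L)).
  assert (HF : forall s, 0 <= s <= v ->
             Un_cv (psum a s) (F s) /\ forall M, 0 <= F s - psum a s M <= Lv - psum a v M).
  { intros s Hs. destruct (psum_converges_below a a_nonneg v Lv s Hs Hv) as [L [HL Htail]].
    assert (E : F s = L).
    { apply (UL_sequence (psum a s)); [|exact HL]. unfold F. apply epsilon_spec. now exists L. }
    rewrite E. now split. }
  set (g := fun s => F (clamp u v s) - y).
  assert (Hg : continuity g).
  { intros x. apply (uniform_limit_continuous (fun N s => psum a (clamp u v s) N - y)).
    - intros N. apply continuity_pt_minus; [|apply continuity_pt_const; intros ? ?; reflexivity].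
      apply (continuity_pt_comp (clamp u v) (fun s => psum a s N)).
      + apply clamp_continuous; lra.
      + apply psum_continuous.
    - intros eps He. destruct (Hv eps He) as [N HN]. exists N. intros s.
      specialize (HN N (le_n _)). unfold Rdist in HN. apply Rabs_def2 in HN.
      pose proof (clamp_range u v s ltac:(lra)).
      destruct (HF (clamp u v s) ltac:(lra)) as [_ Htail]. specialize (Htail N).
      unfold g. rewrite Rabs_pos_eq; lra. }
  assert (Fu : F u = Lu) by (apply (UL_sequence (psum a u)); [apply HF; lra|exact Hu]).
  assert (Fv : F v = Lv) by (apply (UL_sequence (psum a v)); [apply HF; lra|exact Hv]).
  destruct (IVT g u v Hg ltac:(lra)) as [z [Hz Hgz]].
  - unfold g. rewrite clamp_id by lra. lra.
  - unfold g. rewrite clamp_id by lra. lra.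
  - exists z. split; [exact Hz|]. unfold g in Hgz. rewrite clamp_id in Hgz by lra.
    replace y with (F z) by lra. apply HF; lra.
Qed.

(** Generating functions of hitting times, via survival probabilities. *)

(* [a n = P(tau = n)] and [q n = P(tau > n)] for a random time [tau >= 1]. *)
Record hitting_law (a q : nat -> R) : Prop := {
  law_0 : a 0%nat = 0;
  law_survival_0 : q 0%nat = 1;
  law_S : forall n, a (S n) = q n - q (S n);
  law_nonneg : forall n, 0 <= a n }.

Section Abel.
Variables a q : nat -> R.
Hypothesis Hlaw : hitting_law a q.
Let a_0 := law_0 a q Hlaw.
Let q_0 := law_survival_0 a q Hlaw.
Let a_S := law_S a q Hlaw.
Let a_nonneg := law_nonneg a q Hlaw.

Lemma psum_abel s M : psum a s (S M) = 1 + (s - 1) * psum q s M - q (S M) * s ^ S M.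
Proof.
  induction M as [|M IH].
  - unfold psum. simpl. rewrite a_0, a_S, q_0. ring.
  - rewrite psum_S, IH, (psum_S q), a_S. simpl. ring.
Qed.

Lemma psum_at_0 M : psum a 0 M = 0.
Proof.
  induction M as [|M IH]; [unfold psum; simpl; rewrite a_0; ring|].
  rewrite psum_S, IH. simpl. ring.
Qed.

Lemma psum_at_1 : Un_cv q 0 -> Un_cv (psum a 1) 1.
Proof.
  intros Hq eps He. destruct (Hq eps He) as [N HN]. exists (S N). intros [|n] Hn; [lia|].
  rewrite psum_abel, pow1. unfold Rdist in *. specialize (HN (S n) ltac:(lia)).
  replace (1 + (1 - 1) * psum q 1 n - q (S n) * 1 - 1) with (- (q (S n) - 0)) by ring.
  now rewrite Rabs_Ropp.
Qed.

Lemma psum_tail_lower s j M : 1 <= s -> (j <= M)%nat ->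
  s ^ S j * (q j - q M) <= psum a s M.
Proof.
  intros Hs HjM. induction HjM as [|M HjM IH].
  - rewrite Rminus_diag, Rmult_0_r. apply cond_pos_sum. intros n.
    apply Rmult_le_pos; [apply a_nonneg|apply pow_le; lra].
  - rewrite psum_S.
    assert (s ^ S j <= s ^ S M) by (apply Rle_pow; [exact Hs|lia]).
    assert (a (S M) * s ^ S j <= a (S M) * s ^ S M)
      by (apply Rmult_le_compat_l; [apply a_nonneg|exact H]).
    replace (s ^ S j * (q j - q (S M))) with (s ^ S j * (q j - q M) + a (S M) * s ^ S j)
      by (rewrite a_S; ring).
    lra.
Qed.

Lemma limit_tail_lower s L j : 1 <= s -> Un_cv q 0 -> Un_cv (psum a s) L ->
  s ^ S j * q j <= L.
Proof.
  intros Hs Hq HL.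
  apply (Un_cv_le_eventually (fun M => s ^ S j * (q j - q M)) (psum a s) _ _ j); [|exact HL|].
  - replace (s ^ S j * q j) with (s ^ S j * (q j - 0)) by ring.
    apply CV_mult; [apply Un_cv_const|]. apply CV_minus; [apply Un_cv_const|exact Hq].
  - intros M HM. now apply psum_tail_lower.
Qed.

Lemma root_in_unit_interval y : Un_cv q 0 -> 0 < y <= 1 ->
  exists s, 0 < s <= 1 /\ Un_cv (psum a s) y.
Proof.
  intros Hq Hy. pose proof (psum_at_1 Hq) as H1.
  destruct (Req_dec y 1) as [->|Hy1]; [exists 1; split; [lra|exact H1]|].
  assert (H0 : Un_cv (psum a 0) 0)
    by (apply (Un_cv_ext (fun _ => 0)); [intros; now rewrite psum_at_0|apply Un_cv_const]).
  destruct (psum_intermediate_value a a_nonneg 0 1 0 1 y ltac:(lra) H0 H1 ltac:(lra))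
    as [s [[[Hs|Hs] Hs1] Hc]]; [exists s; split; [lra|exact Hc]|].
  subst s. pose proof (UL_sequence _ _ _ Hc H0). lra.
Qed.

End Abel.

Section Compare.
Variables a1 q1 a2 q2 : nat -> R.
Variable d : R.
Hypothesis Hlaw1 : hitting_law a1 q1.
Hypothesis Hlaw2 : hitting_law a2 q2.
Hypothesis q12 : forall n, q1 n <= q2 n <= q1 n + d.

Lemma psum_compare s M : 0 <= s <= 1 -> psum a2 s M <= psum a1 s M <= psum a2 s M + 2 * d.
Proof.
  intros Hs. assert (Hd : 0 <= d) by (pose proof (q12 0); lra).
  destruct M as [|M]; [unfold psum; simpl; rewrite (law_0 _ _ Hlaw1), (law_0 _ _ Hlaw2); lra|].
  rewrite (psum_abel a1 q1 Hlaw1), (psum_abel a2 q2 Hlaw2).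
  assert (Hp : forall n, 0 <= s ^ n <= 1).
  { intros n; split; [apply pow_le; lra|]. rewrite <- (pow1 n). apply pow_incr. lra. }
  set (G := sum_f_R0 (fun k => s ^ k) M).
  assert (HG : 0 <= (1 - s) * G <= 1).
  { pose proof (GP_finite s M). pose proof (Hp (M + 1)%nat). unfold G. nra. }
  assert (HW : 0 <= psum q2 s M - psum q1 s M <= d * G).
  { unfold psum, G. rewrite <- minus_sum, scal_sum. split.
    - apply cond_pos_sum. intros k. rewrite <- Rmult_minus_distr_r.
      apply Rmult_le_pos; [pose proof (q12 k); lra|apply pow_le; lra].
    - apply sum_Rle. intros k _. rewrite <- Rmult_minus_distr_r, Rmult_comm.
      apply Rmult_le_compat_l; [apply pow_le; lra|pose proof (q12 k); lra]. }
  assert (0 <= (1 - s) * (psum q2 s M - psum q1 s M) <= d).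
  { split; [apply Rmult_le_pos; lra|].
    apply Rle_trans with ((1 - s) * (d * G)); [apply Rmult_le_compat_l; lra|]. nra. }
  pose proof (q12 (S M)). pose proof (Hp (S M)).
  assert (0 <= (q2 (S M) - q1 (S M)) * s ^ S M <= d).
  { split; [apply Rmult_le_pos; lra|]. rewrite <- (Rmult_1_r d). apply Rmult_le_compat; lra. }
  nra.
Qed.

Hypothesis a1_2 : 1 / 2 <= a1 2%nat.
Hypothesis a2_2 : 1 / 2 <= a2 2%nat.

Lemma limit_compare_below s t L1 L2 : 0 <= s <= 1 -> s <= t ->
  Un_cv (psum a2 s) L2 -> Un_cv (psum a1 t) L1 -> L2 + 1 / 2 * (t ^ 2 - s ^ 2) <= L1.
Proof.
  intros Hs Hst H2 H1. set (t' := Rmin t 1).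
  assert (Ht' : s <= t' <= 1 /\ t' <= t) by (unfold t', Rmin; destruct (Rle_dec t 1); lra).
  apply (Un_cv_le_eventually (fun M => psum a2 s M + 1 / 2 * (t ^ 2 - s ^ 2)) (psum a1 t) _ _ 2).
  - apply CV_plus; [exact H2|apply Un_cv_const].
  - exact H1.
  - intros M HM.
    pose proof (psum_gap a1 (law_nonneg _ _ Hlaw1) t' t M ltac:(lra) HM).
    pose proof (psum_compare t' M ltac:(lra)).
    pose proof (psum_gap a2 (law_nonneg _ _ Hlaw2) s t' M ltac:(lra) HM).
    assert (0 <= t ^ 2 - t' ^ 2) by nra. assert (0 <= t' ^ 2 - s ^ 2) by nra.
    nra.
Qed.

Lemma limit_compare_above s t L1 L2 : 0 <= s <= t -> t <= 1 ->
  Un_cv (psum a1 s) L1 -> Un_cv (psum a2 t) L2 -> L1 + 1 / 2 * (t ^ 2 - s ^ 2) <= L2 + 2 * d.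
Proof.
  intros Hst Ht H1 H2.
  assert (H : L1 <= L2 - 1 / 2 * (t ^ 2 - s ^ 2) + 2 * d); [|lra].
  apply (Un_cv_le_bound (psum a1 s) _ _ 2 H1). intros M HM.
  pose proof (psum_compare s M ltac:(lra)).
  pose proof (psum_gap a2 (law_nonneg _ _ Hlaw2) s t M Hst HM).
  pose proof (psum_le_limit a2 (law_nonneg _ _ Hlaw2) t L2 M ltac:(lra) H2).
  assert (0 <= t ^ 2 - s ^ 2) by nra.
  nra.
Qed.

End Compare.

Lemma walk_hitting_law h : hitting_law (hitting h) (survival h).
Proof. split; [apply hitting_0|apply survival_0|apply hitting_S|apply hitting_nonneg]. Qed.

Section StripSeries.
Variable T : nat.
Hypothesis HT : (2 <= T)%nat.

Local Notation q := (survival (hitb (Some T))).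
Local Notation a := (hitting (hitb (Some T))).
Local Notation r := (cT T).
Local Notation sigma := (sT T).

(* The walk leaves the strip almost surely ([q_T(n) <= cT^(n-1)]). *)
Lemma strip_survival_cv_0 : Un_cv q 0.
Proof.
  intros e He. pose proof (cT_range T HT) as Hr.
  destruct (pow_cv_0 r Hr e He) as [N HN]. exists (S N). intros [|n] Hn; [lia|].
  specialize (HN n ltac:(lia)). unfold Rdist in *. rewrite Rminus_0_r in *.
  pose proof (survival_bounds (hitb (Some T)) (S n)). pose proof (survival_strip T HT n).
  rewrite Rabs_pos_eq in * by (try apply pow_le; lra). lra.
Qed.

Lemma strip_psum_diverges s L : 1 <= s -> 1 < s * r -> ~ Un_cv (psum a s) L.
Proof.
  intros Hs Hsr HL. pose proof (sT_pos T HT). pose proof (cT_range T HT).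
  assert (Hgrow : forall i, sigma * (s * r) ^ i <= L).
  { intros i.
    pose proof (limit_tail_lower a q (walk_hitting_law _)
                  s L (S i) Hs strip_survival_cv_0 HL) as Htail.
    destruct (survival_strip T HT i) as [Hq _].
    assert (s ^ i <= s ^ S (S i)) by (apply Rle_pow; [exact Hs|lia]).
    assert (0 <= sigma * r ^ i) by (apply Rmult_le_pos; [lra|apply pow_le; lra]).
    assert (0 <= s ^ i) by (apply pow_le; lra).
    rewrite Rpow_mult_distr.
    apply Rle_trans with (s ^ S (S i) * (sigma * r ^ i)); [nra|].
    eapply Rle_trans; [|exact Htail]. apply Rmult_le_compat_l; [lra|exact Hq]. }
  destruct (Pow_x_infinity (s * r) ltac:(rewrite Rabs_pos_eq; lra) ((L + 1) / sigma)) as [i Hi].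
  specialize (Hi i (le_n _)). rewrite Rabs_pos_eq in Hi by (apply pow_le; lra).
  specialize (Hgrow i).
  assert (sigma * ((L + 1) / sigma) <= sigma * (s * r) ^ i) by (apply Rmult_le_compat_l; lra).
  replace (sigma * ((L + 1) / sigma)) with (L + 1) in H1 by (field; lra). lra.
Qed.

Hypothesis HT3 : (3 <= T)%nat.

Lemma cT_pos : 0 < r.
Proof.
  unfold cT. pose proof PI_RGT_0. assert (3 <= INR T) by (replace 3 with (INR 3) by (simpl; lra); apply le_INR; lia).
  assert (0 < PI / INR T) by (apply Rdiv_lt_0_compat; lra).
  assert (PI / INR T < PI / 2).
  { apply Rmult_lt_reg_r with (INR T); [lra|]. field_simplify; [|lra]. nra. }
  apply cos_gt_0; lra.
Qed.

Lemma strip_weighted_survival x n : r <= x ->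
  sigma * x ^ n <= q n * (x / r) ^ n <= x ^ n / r.
Proof.
  intros Hx. pose proof cT_pos. pose proof (cT_range T HT). pose proof (sT_pos T HT).
  assert (sigma <= 1) by apply SIN_bound.
  destruct n as [|n].
  { rewrite survival_0. simpl. split; [lra|]. apply Rmult_le_reg_r with r; [lra|].
    field_simplify; lra. }
  pose proof (survival_strip T HT n) as [Hlo Hup].
  assert (E : q (S n) * (x / r) ^ S n = (q (S n) / r ^ n) * (x / r) * x ^ n)
    by (simpl; unfold Rdiv; rewrite Rpow_mult_distr, pow_inv; field;
        repeat split; try apply pow_nonzero; lra).
  assert (0 < r ^ n) by (apply pow_lt; lra).
  assert (0 <= x ^ n) by (apply pow_le; lra).
  assert (Hratio : sigma <= q (S n) / r ^ n <= 1).
  { split; apply Rmult_le_reg_r with (r ^ n); try lra; field_simplify; lra. }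
  assert (1 <= x / r) by (apply Rmult_le_reg_r with r; [lra|]; field_simplify; lra).
  rewrite E. simpl. split.
  - assert (x <= x / r) by (apply Rmult_le_reg_r with r; [lra|]; field_simplify; nra).
    assert (sigma * x <= q (S n) / r ^ n * (x / r)) by (apply Rmult_le_compat; lra).
    rewrite <- Rmult_assoc. apply Rmult_le_compat_r; lra.
  - replace (x * x ^ n / r) with (x / r * x ^ n) by (field; lra).
    apply Rmult_le_compat_r; [lra|].
    rewrite <- (Rmult_1_l (x / r)) at 2. apply Rmult_le_compat_r; lra.
Qed.

Lemma strip_psum_inside x : r <= x < 1 ->
  exists L, Un_cv (psum a (x / r)) L /\ 1 + (x / r - 1) * sigma / (1 - x) <= L.
Proof.
  intros Hx. pose proof cT_pos. pose proof (sT_pos T HT).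
  set (v := x / r).
  assert (Hv : 1 <= v) by (apply Rmult_le_reg_r with r; [lra|]; unfold v; field_simplify; lra).
  assert (Hweight : forall n, sigma * x ^ n <= q n * v ^ n <= x ^ n / r)
    by (intros n; apply strip_weighted_survival; lra).
  pose proof (geometric_psum x ltac:(lra)) as Hgeo.
  assert (Habel := psum_abel a q (walk_hitting_law _) v).
  destruct (growing_cv (psum a v)) as [L HL].
  { apply psum_growing; [apply hitting_nonneg|lra]. }
  { (* bounded partial sums: [q n v^n <= x^n / r] *)
    exists (1 + (v - 1) * (/ (1 - x) / r)). intros z [[|M] ->].
    - unfold psum; simpl; rewrite hitting_0.
      assert (0 < / (1 - x) / r) by (apply Rdiv_lt_0_compat; [apply Rinv_0_lt_compat|]; lra). nra.
    - rewrite Habel.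
      assert (psum q v M <= / (1 - x) / r).
      { apply Rle_trans with (psum (fun _ => 1) x M / r).
        - unfold psum, Rdiv. rewrite Rmult_comm, scal_sum. apply sum_Rle. intros n _.
          pose proof (Hweight n). lra.
        - unfold Rdiv. apply Rmult_le_compat_r; [left; apply Rinv_0_lt_compat; lra|].
          apply psum_le_limit; [intros; lra|lra|exact Hgeo]. }
      pose proof (survival_bounds (hitb (Some T)) (S M)).
      assert (0 <= q (S M) * v ^ S M) by (apply Rmult_le_pos; [lra|apply pow_le; lra]). nra. }
  exists L. split; [exact HL|].
  (* lower bound: [q n v^n >= sigma x^n] *)
  apply (Un_cv_le_bound (fun M => 1 + (v - 1) * sigma * psum (fun _ => 1) x M - x ^ S M / r) _ _ O).
  - replace (1 + (v - 1) * sigma / (1 - x)) with (1 + (v - 1) * sigma * / (1 - x) - 0 / r)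
      by (field; lra).
    apply CV_minus; [apply CV_plus; [apply Un_cv_const|apply CV_mult; [apply Un_cv_const|exact Hgeo]]|].
    unfold Rdiv. apply CV_mult; [|apply Un_cv_const].
    intros e He. destruct (pow_cv_0 x ltac:(lra) e He) as [N HN].
    exists N. intros n Hn. apply HN. lia.
  - intros M _. eapply Rle_trans; [|apply (psum_le_limit _ (hitting_nonneg _) v L (S M) ltac:(lra) HL)].
    rewrite Habel.
    assert (sigma * psum (fun _ => 1) x M <= psum q v M).
    { unfold psum. rewrite scal_sum. apply sum_Rle. intros n _. pose proof (Hweight n). lra. }
    pose proof (Hweight (S M)). nra.
Qed.

(* Near the radius [1/r] the generating function is arbitrarily large, so every
   value above 1 is attained at some [s >= 1]. *)
Lemma strip_root_above_1 y : 1 < y -> exists s, 1 <= s /\ Un_cv (psum a s) y.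
Proof.
  intros Hy. pose proof cT_pos. pose proof (cT_range T HT). pose proof (sT_pos T HT).
  set (eta := Rmin ((1 - r) / 2) ((1 - r) * sigma / (4 * y))).
  assert (Heta : 0 < eta /\ eta <= (1 - r) / 2 /\ eta * (4 * y) <= (1 - r) * sigma).
  { assert (0 < (1 - r) * sigma / (4 * y))
      by (apply Rdiv_lt_0_compat; [apply Rmult_lt_0_compat|]; lra).
    assert (Hmin : eta <= (1 - r) * sigma / (4 * y)) by apply Rmin_r.
    apply (Rmult_le_compat_r (4 * y)) in Hmin; [|lra].
    replace ((1 - r) * sigma / (4 * y) * (4 * y)) with ((1 - r) * sigma) in Hmin by (field; lra).
    unfold eta, Rmin in *. destruct (Rle_dec _ _); lra. }
  set (x := 1 - eta).
  destruct (strip_psum_inside x ltac:(unfold x; lra)) as [L [HL HLbig]].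
  assert (Hv : (1 - r) / 2 <= x / r - 1).
  { apply Rmult_le_reg_r with r; [lra|]. field_simplify; [|lra]. unfold x. nra. }
  assert (HLy : y < L).
  { replace (1 - x) with eta in HLbig by (unfold x; ring).
    assert (Hbound : 2 * y <= (x / r - 1) * sigma / eta).
    { apply Rmult_le_reg_r with eta; [lra|].
      replace ((x / r - 1) * sigma / eta * eta) with ((x / r - 1) * sigma) by (field; lra).
      nra. }
    lra. }
  pose proof (psum_at_1 a q (walk_hitting_law _) strip_survival_cv_0) as Hat1.
  destruct (psum_intermediate_value a (hitting_nonneg _) 1 (x / r) 1 L y
              ltac:(unfold x in *; lra) Hat1 HL ltac:(lra)) as [s [Hs Hc]].
  exists s. split; [lra|exact Hc].
Qed.

End StripSeries.

Lemma exp_mult_INR lam n : exp (- lam * INR n) = exp (- lam) ^ n.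
Proof.
  induction n as [|n IH]; [simpl; now rewrite Rmult_0_r, exp_0|].
  rewrite S_INR, Rmult_plus_distr_l, Rmult_1_r, exp_plus, IH. simpl. ring.
Qed.

Lemma Q_eq_psum T lam y :
  Q_eq T lam y <-> Un_cv (psum (hitting (hitb T)) (exp (- lam))) y.
Proof.
  assert (E : forall M, sum_f_R0 (Q_term T lam) M = psum (hitting (hitb T)) (exp (- lam)) M).
  { intros M. apply sum_eq. intros n _. unfold Q_term. now rewrite tau_prob_hitting, exp_mult_INR. }
  split; intros H; [exact (Un_cv_ext _ _ E y H)|].
  exact (Un_cv_ext _ _ (fun M => eq_sym (E M)) y H).
Qed.

Lemma Qinv_spec T y s : 0 < s -> Un_cv (psum (hitting (hitb T)) s) y ->
  Q_eq T (Qinv T y) y.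
Proof.
  intros Hs Hc. unfold Qinv. apply epsilon_spec. exists (- ln s).
  apply Q_eq_psum. now rewrite Ropp_involutive, exp_ln.
Qed.

(* The walk returns to 0 almost surely: compare with the strip of width [T]. *)
Lemma origin_survival_cv_0 : Un_cv (survival (hitb None)) 0.
Proof.
  intros e He. destruct (INR_unbounded (2 / e)) as [K HK].
  set (T := S (S K)). assert (HT : (2 <= T)%nat) by (unfold T; lia).
  assert (HTe : 1 / INR T < e / 2).
  { assert (INR K < INR T) by (apply lt_INR; unfold T; lia). pose proof (pos_INR K).
    assert (H2e : 2 / e * e < INR T * e) by (apply Rmult_lt_compat_r; lra).
    replace (2 / e * e) with 2 in H2e by (field; lra).
    apply Rmult_lt_reg_r with (2 * INR T); [lra|].
    replace (1 / INR T * (2 * INR T)) with 2 by (field; lra).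
    replace (e / 2 * (2 * INR T)) with (INR T * e) by field. lra. }
  destruct (strip_survival_cv_0 T HT (e / 2) ltac:(lra)) as [N HN]. exists N. intros n Hn.
  specialize (HN n Hn). unfold Rdist in *. rewrite Rminus_0_r in *.
  pose proof (survival_origin_vs_strip T HT n).
  pose proof (survival_bounds (hitb None) n). pose proof (survival_bounds (hitb (Some T)) n).
  rewrite Rabs_pos_eq in * by lra. lra.
Qed.

Lemma Qinv_origin_spec y : 0 < y <= 1 -> Q_eq None (Qinv None y) y.
Proof.
  intros Hy.
  destruct (root_in_unit_interval _ _ (walk_hitting_law _) y origin_survival_cv_0 Hy)
    as [s [Hs Hc]].
  apply (Qinv_spec _ _ s); [lra|exact Hc].
Qed.

Lemma Qinv_strip_spec T y : (3 <= T)%nat -> 0 < y -> Q_eq (Some T) (Qinv (Some T) y) y.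
Proof.
  intros HT Hy. destruct (Rle_dec y 1) as [Hy1|Hy1].
  - destruct (root_in_unit_interval _ _ (walk_hitting_law _) y
                (strip_survival_cv_0 T ltac:(lia)) ltac:(lra)) as [s [Hs Hc]].
    apply (Qinv_spec _ _ s); [lra|exact Hc].
  - destruct (strip_root_above_1 T ltac:(lia) HT y ltac:(lra)) as [s [Hs Hc]].
    apply (Qinv_spec _ _ s); [lra|exact Hc].
Qed.

(** Convergence of the inverses. *)

Local Notation aI := (hitting (hitb None)).
Local Notation qI := (survival (hitb None)).
Local Notation aT T := (hitting (hitb (Some T))).
Local Notation qT T := (survival (hitb (Some T))).

Lemma origin_psum_vs_1 s L : 0 <= s -> Un_cv (psum aI s) L ->
  (s < 1 -> L < 1) /\ (1 < s -> 1 < L).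
Proof.
  intros Hs HL.
  pose proof (psum_at_1 _ _ (walk_hitting_law _) origin_survival_cv_0) as H1.
  pose proof (hitting_2 _ admissible_origin).
  pose proof (law_nonneg _ _ (walk_hitting_law (hitb None))) as Hnn.
  assert (E1 : 1 ^ 2 = 1) by ring.
  split; intros Hs1.
  - pose proof (limit_gap aI Hnn s 1 L 1 ltac:(lra) HL H1).
    assert (0 < 1 ^ 2 - s ^ 2) by nra. nra.
  - pose proof (limit_gap aI Hnn 1 s 1 L ltac:(lra) H1 HL).
    assert (0 < s ^ 2 - 1 ^ 2) by nra. nra.
Qed.

Section Roots.
Variables y si : R.
Hypothesis Hsi : 0 < si.
Hypothesis HI : Un_cv (psum aI si) (Rmin y 1).

Lemma origin_root_le_1 : si <= 1.
Proof.
  destruct (Rle_dec si 1) as [|Hgt]; [easy|exfalso].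
  destruct (origin_psum_vs_1 si _ ltac:(lra) HI) as [_ H]. specialize (H ltac:(lra)).
  unfold Rmin in H. destruct (Rle_dec y 1); lra.
Qed.

Lemma origin_root_eq_1 : 1 < y -> si = 1.
Proof.
  intros Hy1. destruct (Rlt_dec si 1) as [Hlt|Hge]; [exfalso|pose proof origin_root_le_1; lra].
  destruct (origin_psum_vs_1 si _ ltac:(lra) HI) as [H _]. specialize (H Hlt).
  unfold Rmin in H. destruct (Rle_dec y 1); lra.
Qed.

Lemma strip_root_lower T sk eps : (2 <= T)%nat -> 0 < eps -> 0 <= sk ->
  Un_cv (psum (aT T) sk) y ->
  2 / INR T < 1 / 2 * (si ^ 2 - (si * exp (- eps)) ^ 2) -> si * exp (- eps) < sk.
Proof.
  intros HT Heps Hsk HL Hgap.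
  destruct (Rlt_dec (si * exp (- eps)) sk) as [|Hle]; [easy|exfalso].
  pose proof origin_root_le_1. pose proof (exp_pos (- eps)).
  assert (exp (- eps) < 1) by (rewrite <- exp_0; apply exp_increasing; lra).
  assert (Hsmall : sk <= si * exp (- eps)) by lra.
  assert (Hsk_si : sk <= si) by nra.
  pose proof (limit_compare_above (aT T) (qT T) aI qI (1 / INR T) (walk_hitting_law _) (walk_hitting_law _)
                (survival_origin_vs_strip T HT) (hitting_2 _ admissible_origin)
                sk si y (Rmin y 1) ltac:(lra) ltac:(lra) HL HI).
  assert (Rmin y 1 <= y) by apply Rmin_l.
  assert (sk ^ 2 <= (si * exp (- eps)) ^ 2) by (apply pow_incr; lra).
  replace (2 * (1 / INR T)) with (2 / INR T) in H2 by (unfold Rdiv; ring). lra.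
Qed.

(* The strip root cannot be much larger than [si] once [cos (PI/T)] is close
   to 1: for [y <= 1] by comparison, for [y > 1] by the radius of convergence. *)
Lemma strip_root_upper T sk eps : (2 <= T)%nat -> 0 < eps -> 0 <= sk ->
  Un_cv (psum (aT T) sk) y -> exp (- eps) < cT T -> sk < si * exp eps.
Proof.
  intros HT Heps Hsk HL Hr. destruct (Rlt_dec sk (si * exp eps)) as [|Hge]; [easy|exfalso].
  assert (Hexp : 1 < exp eps) by (rewrite <- exp_0; apply exp_increasing; lra).
  destruct (Rle_dec y 1) as [Hy1|Hy1].
  - pose proof (limit_compare_below (aT T) (qT T) aI qI (1 / INR T) (walk_hitting_law _) (walk_hitting_law _)
                  (survival_origin_vs_strip T HT)
                  (hitting_2 _ (admissible_strip T HT)) (hitting_2 _ admissible_origin)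
                  si sk y (Rmin y 1) ltac:(pose proof origin_root_le_1; lra) ltac:(nra) HI HL).
    assert (Rmin y 1 = y) by (apply Rmin_left; exact Hy1).
    assert (si < sk) by nra. assert (si ^ 2 < sk ^ 2) by nra.
    lra.
  - rewrite (origin_root_eq_1 ltac:(lra)), Rmult_1_l in Hge.
    apply (strip_psum_diverges T HT sk y); [lra| |exact HL].
    pose proof (exp_pos (- eps)).
    assert (exp eps * exp (- eps) = 1) by (rewrite <- exp_plus, Rplus_opp_r, exp_0; reflexivity).
    nra.
Qed.

End Roots.

Lemma strip_eventually c r : 0 < c -> r < 1 ->
  exists N, forall T, (N <= T)%nat -> (3 <= T)%nat /\ 2 / INR T < c /\ r < cT T.
Proof.
  intros Hc Hr.
  destruct (continuity_cos 0 (1 - r) ltac:(lra)) as [dc [Hdc Hcos]].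
  pose proof PI_RGT_0.
  destruct (INR_unbounded (2 / c + PI / dc)) as [N HN].
  assert (0 < 2 / c) by (apply Rdiv_lt_0_compat; lra).
  assert (0 < PI / dc) by (apply Rdiv_lt_0_compat; lra).
  exists (S (S (S N))). intros T HT.
  assert (HNT : INR N < INR T) by (apply lt_INR; lia).
  assert (HTpos : 0 < INR T) by (pose proof (pos_INR N); lra).
  split; [lia|split].
  - assert (2 / c * c < INR T * c) by (apply Rmult_lt_compat_r; lra).
    replace (2 / c * c) with 2 in H2 by (field; lra).
    apply Rmult_lt_reg_r with (INR T); [lra|].
    replace (2 / INR T * INR T) with 2 by (field; lra). lra.
  - assert (Hsmall : PI / INR T < dc).
    { assert (PI / dc * dc < INR T * dc) by (apply Rmult_lt_compat_r; lra).
      replace (PI / dc * dc) with PI in H2 by (field; lra).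
      apply Rmult_lt_reg_r with (INR T); [lra|].
      replace (PI / INR T * INR T) with PI by (field; lra). lra. }
    assert (0 < PI / INR T) by (apply Rdiv_lt_0_compat; lra).
    specialize (Hcos (PI / INR T)). simpl in Hcos. unfold R_dist in Hcos.
    rewrite cos_0 in Hcos.
    assert (Hd : Rabs (cos (PI / INR T) - 1) < 1 - r).
    { apply Hcos. split; [split; [exact I|lra]|]. rewrite Rminus_0_r, Rabs_pos_eq; lra. }
    apply Rabs_def2 in Hd. unfold cT. lra.
Qed.

Lemma exp_bracket l l0 eps :
  exp (- l0) * exp (- eps) < exp (- l) < exp (- l0) * exp eps -> Rabs (l - l0) < eps.
Proof.
  rewrite <- !exp_plus. intros [Hlo Hup].
  apply exp_lt_inv in Hlo. apply exp_lt_inv in Hup. apply Rabs_def1; lra.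
Qed.

Theorem lemma4 (delta : R) :
  Un_cv (fun k : nat => Qinv (Some (2 * (k + 1))%nat) (exp (- delta)))
        (Qinv None (Rmin (exp (- delta)) 1)).
Proof.
  set (y := exp (- delta)). assert (Hy : 0 < y) by apply exp_pos.
  set (li := Qinv None (Rmin y 1)).
  assert (HI : Un_cv (psum aI (exp (- li))) (Rmin y 1)).
  { apply Q_eq_psum, Qinv_origin_spec.
    unfold Rmin; destruct (Rle_dec y 1); lra. }
  set (si := exp (- li)) in HI. assert (Hsi : 0 < si) by apply exp_pos.
  intros eps Heps.
  assert (He : 0 < exp (- eps) < 1)
    by (split; [apply exp_pos|rewrite <- exp_0; apply exp_increasing; lra]).
  assert (Hgap : 0 < 1 / 2 * (si ^ 2 - (si * exp (- eps)) ^ 2)).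
  { assert (0 < si * exp (- eps) < si) by (split; nra). nra. }
  destruct (strip_eventually _ _ Hgap (proj2 He)) as [N HN].
  exists N. intros k Hk.
  set (T := (2 * (k + 1))%nat). destruct (HN T ltac:(unfold T; lia)) as (HT & HTgap & HTr).
  assert (HL : Un_cv (psum (aT T) (exp (- Qinv (Some T) y))) y)
    by (apply Q_eq_psum, Qinv_strip_spec; [exact HT|exact Hy]).
  apply exp_bracket. split.
  - exact (strip_root_lower y si Hsi HI T _ eps ltac:(lia) Heps (Rlt_le _ _ (exp_pos _)) HL HTgap).
  - exact (strip_root_upper y si Hsi HI T _ eps ltac:(lia) Heps (Rlt_le _ _ (exp_pos _)) HL HTr).
Qed.
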